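(* Let $\mathcal F,\mathcal G\subset 2^{[n]}$ be cross-intersecting families, i.e. $A\cap B\neq\emptyset$ for all $A\in\mathcal F$, $B\in\mathcal G$. Then $$|\mathcal F|+|\mathcal G|\le \max\{|\mathcal F^{\downarrow}|,|\mathcal G^{\downarrow}|\}.$$
   Context: $[n]=\{1,\dots,n\}$. For a family $\mathcal F$, $\mathcal F^{\downarrow}=\{G:\exists F\in\mathcal F,\ G\subset F\}$ is the down-set generated by $\mathcal F$. *)

From mathcomp Require Import all_boot.
Set Implicit Arguments. Unset Strict Implicit. Unset Printing Implicit Defensive.

(* Ground set [n] is modelled by 'I_n; families are {set {set 'I_n}}. *)

Definition cross_intersecting (n : nat) (F G : {set {set 'I_n}}) : Prop :=
  forall A B, A \in F -> B \in G -> A :&: B != set0.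

Definition downset (n : nat) (F : {set {set 'I_n}}) : {set {set 'I_n}} :=
  [set H : {set 'I_n} | [exists A in F, H \subset A]].

(** For families [F], [G] put [F \ G = {A \ B | A in F, B in G}].  Induction on
    the ground set, splitting each family according to a point [x], gives the
    Ahlswede–Daykin type inequality [|F| |G| <= |F \ G| |G \ F|].
    If [F] and [G] are cross-intersecting then no [A \ B] lies in [F], so [F] and
    [F \ G] are disjoint parts of the down-set of [F], and likewise for [G].
    Hence [|F| + |F \ G| <= |F^down|] and [|G| + |G \ F| <= |G^down|], and the
    product inequality forces [|G| <= |F \ G|] or [|F| <= |G \ F|]. *)
From mathcomp Require Import all_boot zify.
Set Implicit Arguments. Unset Strict Implicit. Unset Printing Implicit Defensive.

(* The one-point step of the induction.  After scaling by [c0 d0]: [c0 d0 c1 d1]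
   dominates [(a1 b0)(a0 b1) = (a0 b0)(a1 b1)], and
   [(c0 d0 - a0 b0)(c0 d0 - a1 b1) >= 0]. *)
Lemma leq_mul_addn a0 a1 b0 b1 c0 c1 d0 d1 :
    a0 * b0 <= c0 * d0 -> a1 * b1 <= c0 * d0 ->
    a1 * b0 <= c1 * d0 -> a0 * b1 <= c0 * d1 ->
  (a0 + a1) * (b0 + b1) <= (c0 + c1) * (d0 + d1).
Proof.
move=> le00 le11 le10 le01.
have [P0|P_gt0] := posnP (c0 * d0); first nia.
rewrite -(leq_pmul2l P_gt0).
have cross : (a0 * b0) * (a1 * b1) <= (c0 * d0) * (c1 * d1).
  have -> : (a0 * b0) * (a1 * b1) = (a1 * b0) * (a0 * b1) by nia.
  have -> : (c0 * d0) * (c1 * d1) = (c1 * d0) * (c0 * d1) by nia.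
  exact: leq_mul.
have diag : (c0 * d0) * (a0 * b0 + a1 * b1)
            <= (c0 * d0) * (c0 * d0) + (a0 * b0) * (a1 * b1).
  move: (c0 * d0) (a0 * b0) (a1 * b1) le00 le11 => P p q; nia.
nia.
Qed.

Section SetDifferences.

Variable T : finType.
Implicit Types (F G : {set {set T}}) (A B C X : {set T}) (x : T).

Definition fam_diff F G := [set A :\: B | A in F, B in G].

Definition fam_avoid x F := [set A in F | x \notin A].

Definition fam_link x F := [set A :\ x | A in [set A in F | x \in A]].

Lemma card_fam_avoid_link x F : #|F| = #|fam_avoid x F| + #|fam_link x F|.
Proof.
rewrite /fam_link card_in_imset; last first.
  move=> A1 A2; rewrite !inE => /andP[_ xA1] /andP[_ xA2] eqA.
  by rewrite -(setD1K xA1) -(setD1K xA2) eqA.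
rewrite -(cardsID [set A : {set T} | x \in A] F) addnC.
by congr (_ + _); apply: eq_card => A; rewrite !inE andbC.
Qed.

Lemma fam_avoid_sub x X F :
  {in F, forall A, A \subset X} -> {in fam_avoid x F, forall A, A \subset X :\ x}.
Proof. by move=> sFX A; rewrite inE => /andP[FA xA]; rewrite subsetD1 sFX. Qed.

Lemma fam_link_sub x X F :
  {in F, forall A, A \subset X} -> {in fam_link x F, forall A, A \subset X :\ x}.
Proof. by move=> sFX C /imsetP[A]; rewrite inE => /andP[FA _] ->; rewrite setSD ?sFX. Qed.

Lemma card_fam_diff_gt0 F G : 0 < #|F| -> 0 < #|G| -> 0 < #|fam_diff F G|.
Proof.
move=> /card_gt0P[A FA] /card_gt0P[B GB].
by apply/card_gt0P; exists (A :\: B); apply: imset2_f.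
Qed.

Lemma card_fam_diff_split x F G :
  #|fam_diff F G| = #|[set C in fam_diff F G | x \notin C]|
                  + #|[set C in fam_diff F G | x \in C]|.
Proof.
rewrite -(cardsID [set C : {set T} | x \in C] (fam_diff F G)) addnC.
by congr (_ + _); apply: eq_card => C; rewrite !inE andbC.
Qed.

Lemma fam_diff_sub_avoiding x F G F' G' :
    {in F' & G', forall A B, exists2 A0, A0 \in F &
       exists2 B0, B0 \in G & A :\: B = A0 :\: B0 /\ x \notin A0 :\: B0} ->
  fam_diff F' G' \subset [set C in fam_diff F G | x \notin C].
Proof.
move=> diff_eq; apply/subsetP => C /imset2P[A B F'A G'B ->].
have [A0 FA0 [B0 GB0 [-> xAB]]] := diff_eq A B F'A G'B.
by rewrite inE xAB imset2_f.
Qed.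

Lemma fam_diff_avoid_avoid_sub x F G :
  fam_diff (fam_avoid x F) (fam_avoid x G) \subset [set C in fam_diff F G | x \notin C].
Proof.
apply: fam_diff_sub_avoiding => A B; rewrite !inE => /andP[FA xA] /andP[GB _].
by exists A => //; exists B => //; rewrite inE (negbTE xA) andbF.
Qed.

Lemma fam_diff_avoid_link_sub x F G :
  fam_diff (fam_avoid x F) (fam_link x G) \subset [set C in fam_diff F G | x \notin C].
Proof.
apply: fam_diff_sub_avoiding => A B'; rewrite inE => /andP[FA xA] /imsetP[B].
rewrite inE => /andP[GB _] ->; exists A => //; exists B => //.
split; last by rewrite inE (negbTE xA) andbF.
by apply/setP => y; rewrite !inE; case: eqP => [->|]; rewrite ?(negbTE xA) ?andbF.
Qed.

Lemma fam_diff_link_link_sub x F G :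
  fam_diff (fam_link x F) (fam_link x G) \subset [set C in fam_diff F G | x \notin C].
Proof.
apply: fam_diff_sub_avoiding => A' B' /imsetP[A]; rewrite inE => /andP[FA _] ->.
move=> /imsetP[B]; rewrite inE => /andP[GB xB] ->; exists A => //; exists B => //.
split; last by rewrite inE xB.
by apply/setP => y; rewrite !inE; case: eqP => [->|]; rewrite ?xB ?andbF.
Qed.

Lemma leq_card_fam_diff_link_avoid x F G :
  #|fam_diff (fam_link x F) (fam_avoid x G)| <= #|[set C in fam_diff F G | x \in C]|.
Proof.
apply: leq_trans (leq_imset_card (fun C => C :\ x) _); apply: subset_leq_card.
apply/subsetP => C /imset2P[A' B /imsetP[A + ->] + ->]; rewrite !inE.
move=> /andP[FA xA] /andP[GB xB]; apply/imsetP; exists (A :\: B).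
  by rewrite inE imset2_f // inE xA xB.
by apply/setP => y; rewrite !inE andbCA.
Qed.

Lemma leq_card_mul_fam_diff X F G :
    {in F, forall A, A \subset X} -> {in G, forall B, B \subset X} ->
  #|F| * #|G| <= #|fam_diff F G| * #|fam_diff G F|.
Proof.
move: {2}#|X| (erefl #|X|) => k; elim: k X F G => [|k IHk] X F G cardX sFX sGX.
  have X0 : X = set0 by apply/eqP; rewrite -cards_eq0 cardX.
  have card_le1 (H : {set {set T}}) : {in H, forall A, A \subset X} -> #|H| <= 1.
    move=> sHX; rewrite -(cards1 (set0 : {set T})); apply: subset_leq_card.
    by apply/subsetP => A HA; rewrite inE -subset0 -X0 sHX.
  have [-> //|F_gt0] := posnP #|F|.
  have [->|G_gt0] := posnP #|G|; first by rewrite muln0.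
  have := card_le1 F sFX; have := card_le1 G sGX.
  have := card_fam_diff_gt0 F_gt0 G_gt0; have := card_fam_diff_gt0 G_gt0 F_gt0.
  nia.
have [x Xx] : exists x, x \in X by apply/card_gt0P; rewrite cardX.
have cardXx : #|X :\ x| = k by move: cardX; rewrite (cardsD1 x X) Xx => -[].
have IH := IHk _ _ _ cardXx.
rewrite (card_fam_avoid_link x F) (card_fam_avoid_link x G).
rewrite (card_fam_diff_split x F G) (card_fam_diff_split x G F).
apply: leq_mul_addn.
- apply: leq_trans (IH _ _ (fam_avoid_sub sFX) (fam_avoid_sub sGX)) _.
  by apply: leq_mul; apply/subset_leq_card/fam_diff_avoid_avoid_sub.
- apply: leq_trans (IH _ _ (fam_link_sub sFX) (fam_link_sub sGX)) _.
  by apply: leq_mul; apply/subset_leq_card/fam_diff_link_link_sub.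
- apply: leq_trans (IH _ _ (fam_link_sub sFX) (fam_avoid_sub sGX)) _.
  apply: leq_mul; first exact: leq_card_fam_diff_link_avoid.
  exact/subset_leq_card/fam_diff_avoid_link_sub.
- apply: leq_trans (IH _ _ (fam_avoid_sub sFX) (fam_link_sub sGX)) _.
  apply: leq_mul; last exact: leq_card_fam_diff_link_avoid.
  exact/subset_leq_card/fam_diff_avoid_link_sub.
Qed.

End SetDifferences.

Lemma cross_intersectingC n (F G : {set {set 'I_n}}) :
  cross_intersecting F G -> cross_intersecting G F.
Proof. by move=> FG A B GA FB; rewrite setIC FG. Qed.

Lemma card_downset_fam_diff n (F G : {set {set 'I_n}}) :
  cross_intersecting F G -> #|F| + #|fam_diff F G| <= #|downset F|.
Proof.
move=> FG; have disjF : F :&: fam_diff F G = set0.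
  apply/setP => C; rewrite !inE; apply/negbTE/andP => -[FC /imset2P[A B _ GB eqC]].
  move/negP: (FG C B FC GB).
  by rewrite eqC setDE -setIA [~: B :&: B]setIC setICr setI0 eqxx.
rewrite -cardsUI disjF cards0 addn0; apply/subset_leq_card/subsetP => C.
rewrite !inE => /orP[FC|/imset2P[A B FA _ ->]]; apply/existsP.
- by exists C; rewrite FC subxx.
- by exists A; rewrite FA subsetDl.
Qed.

Theorem theorem1p6 (n : nat) (F G : {set {set 'I_n}}) :
  cross_intersecting F G ->
  #|F| + #|G| <= maxn #|downset F| #|downset G|.
Proof.
move=> FG.
have card_mul := @leq_card_mul_fam_diff _ [set: 'I_n] F G
  (fun A _ => subsetT A) (fun B _ => subsetT B).
have downF := card_downset_fam_diff FG.
have downG := card_downset_fam_diff (cross_intersectingC FG).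
have [G_le|diff_lt] := leqP #|G| #|fam_diff F G|.
  by apply: leq_trans (leq_maxl _ _); apply: leq_trans downF; rewrite leq_add2l.
have F_le : #|F| <= #|fam_diff G F|.
  by rewrite leqNgt; apply: contraTN card_mul => lt_F; rewrite -ltnNge mulnC ltn_mul.
by apply: leq_trans (leq_maxr _ _); apply: leq_trans downG; rewrite addnC leq_add2l.
Qed.
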